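(* Let $\mathcal{W}$ be a finite set, let $(X_t)_{t\ge 1}$ be a time-homogeneous first-order Markov chain on $\mathcal{W}$ with initial distribution $p_{x_1}$ and transition probabilities $q_x(x_{t+1}\mid x_t)$, and let $d:\mathcal{W}\times\mathcal{W}\to\mathbb{R}$ be a distortion measure and $\bar D$ a threshold. Consider the optimization problem $$\min_{\{q_t(y_t\mid x^t,y^{t-1})\}_{t\ge 1}} \ \lim_{n\to\infty}\frac1n\sum_{t=1}^n I^{\boldsymbol q}(X^t;Y_t\mid Y^{t-1})\quad\text{subject to}\quad \lim_{n\to\infty}\mathbb{E}\Big[\frac1n\sum_{t=1}^n d(X_t,Y_t)\Big]\le \bar D,$$ where the minimization is over the set $\mathcal{Q}_H$ of history-dependent release policies. Then there is no loss of optimality in restricting this minimization to the set $\mathcal{Q}_S\subseteq\mathcal{Q}_H$ of simplified policies, i.e. policies $\boldsymbol q_s=\{q^s_t(y_t\mid x_t,x_{t-1},y^{t-1})\}_{t\ge1}$. Furthermore, for any $\boldsymbol q_s\in\mathcal{Q}_S$ and any $n$, the induced information leakage satisfies $$I^{\boldsymbol q_s}(X^n;Y^n)=\sum_{t=1}^n I^{\boldsymbol q_s}(X_t,X_{t-1};Y_t\mid Y^{t-1})=\sum_{t=1}^n\ \sum_{y^t\in\mathcal{W}^t,\ x_t,x_{t-1}\in\mathcal{W}} P^{\boldsymbol q_s}(x_t,x_{t-1},y^t)\log\frac{q^s_t(y_t\mid x_t,x_{t-1},y^{t-1})}{P^{\boldsymbol q_s}(y_t\mid y^{t-1})}.$$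
   Context: Notation: $X^t=(X_1,\dots,X_t)$, $Y^{t-1}=(Y_1,\dots,Y_{t-1})$, with $Y^0$ empty; at $t=1$ terms involving $X_0$ are absent (e.g. $q_1(y_1\mid x_1)$). A history-dependent location release policy is a sequence $\boldsymbol q=\{q_t(y_t\mid x^t,y^{t-1})\}_{t\ge1}$ of conditional probability distributions on $\mathcal{W}$ (so $\sum_{y_t\in\mathcal W}q_t(y_t\mid x^t,y^{t-1})=1$); $\mathcal{Q}_H$ denotes the set of all such policies. The released locations $Y_t\in\mathcal{W}$ are generated so that the joint law is $$P^{\boldsymbol q}(X^n=x^n,Y^n=y^n)=p_{x_1}(x_1)q_1(y_1\mid x_1)\prod_{t=2}^n q_x(x_t\mid x_{t-1})\,q_t(y_t\mid x^t,y^{t-1}).$$ $I^{\boldsymbol q}$, $P^{\boldsymbol q}$ and the expectation denote mutual information, probabilities and expectation under this joint law. $\mathcal{Q}_S$ is the set of policies in $\mathcal{Q}_H$ of the form $q^s_t(y_t\mid x_t,x_{t-1},y^{t-1})$, i.e. depending on the true trajectory only through the current and previous true locations (and on the whole released history). *)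

From HB Require Import structures.
From mathcomp Require Import all_boot all_order all_algebra.
From mathcomp Require Import all_classical all_reals all_analysis.
Unset Printing Implicit Defensive.
Import Order.TTheory GRing.Theory Num.Theory.
Local Open Scope ring_scope.

Section Privacy.
Context {R : realType} {W : finType}.

Definition xlogr (p a : R) : R := if p == 0 then 0 else p * ln a.

Definition MI {A B : finType} (P : A -> B -> R) : R :=
  \sum_(a : A) \sum_(b : B)
     xlogr (P a b) (P a b / ((\sum_(b' : B) P a b') * (\sum_(a' : A) P a' b))).

Definition CMI {A B C : finType} (P : A -> B -> C -> R) : R :=
  \sum_(a : A) \sum_(b : B) \sum_(c : C)
     xlogr (P a b c)
       (P a b c * (\sum_(a' : A) \sum_(b' : B) P a' b' c)
        / ((\sum_(b' : B) P a b' c) * (\sum_(a' : A) P a' b c))).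

Definition is_pmf (p : W -> R) : Prop :=
  (forall x, 0 <= p x) /\ \sum_(x : W) p x = 1.

(* qx a b = q_x(X_{t+1} = b | X_t = a) *)
Definition is_kernel (qx : W -> W -> R) : Prop :=
  (forall a b, 0 <= qx a b) /\ (forall a, \sum_(b : W) qx a b = 1).

(* A history-dependent policy, 0-based time: q i xs ys y stands for
   q_{i+1}(y_{i+1} = y | x^{i+1} = xs, y^{i} = ys); only its values on
   |xs| = i+1, |ys| = i matter. *)
Definition policy := nat -> seq W -> seq W -> W -> R.

Definition is_policyH (q : policy) : Prop :=
  forall (i : nat) (xs : i.+1.-tuple W) (ys : i.-tuple W),
    (forall y, 0 <= q i xs ys y) /\ \sum_(y : W) q i xs ys y = 1.

Definition chainP (p1 : W -> R) (qx : W -> W -> R) (xs : seq W) : R :=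
  if xs is x :: s then p1 x * \prod_(pr <- zip xs s) qx pr.1 pr.2 else 1.

Definition polP (q : policy) (xs ys : seq W) : R :=
  \prod_(pr <- zip (iota 0 (size ys)) ys)
     q pr.1 (take pr.1.+1 xs) (take pr.1 ys) pr.2.

Definition jointP p1 qx (q : policy) (xs ys : seq W) : R :=
  chainP p1 qx xs * polP q xs ys.

(* (X_{t-1}, X_t) of a trajectory; X_0 absent is encoded as None *)
Definition lasttwo (xs : seq W) : option (option W * W) :=
  match rev xs with
  | [::] => None
  | [:: x] => Some (None, x)
  | x :: x' :: _ => Some (Some x', x)
  end.

(* simplified policies: qs i xprev x ys y = q^s_{i+1}(y | x_{i+1}=x, x_i=xprev, y^i = ys) *)
Definition spolicy := nat -> option W -> W -> seq W -> W -> R.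

Definition embedS (qs : spolicy) : policy :=
  fun i xs ys y => if lasttwo xs is Some (pw, w) then qs i pw w ys y else 0.

(* joint pmf of (X^t, Y_t, Y^{t-1}), t = i+1 *)
Definition P_hist p1 qx (q : policy) (i : nat)
  (xs : i.+1.-tuple W) (y : W) (yp : i.-tuple W) : R :=
  jointP p1 qx q xs (rcons yp y).

(* joint pmf of ((X_{t-1}, X_t), Y_t, Y^{t-1}), t = i+1 *)
Definition P_simp p1 qx (q : policy) (i : nat)
  (pr : option W * W) (y : W) (yp : i.-tuple W) : R :=
  \sum_(xs : i.+1.-tuple W | lasttwo xs == Some pr) jointP p1 qx q xs (rcons yp y).

Definition PY p1 qx (q : policy) (t : nat) (ys : seq W) : R :=
  \sum_(xs : t.-tuple W) jointP p1 qx q xs ys.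

Definition leakage p1 qx (q : policy) (n : nat) : R :=
  MI (fun xs ys : n.-tuple W => jointP p1 qx q xs ys).

Definition avg_leak p1 qx (q : policy) (n : nat) : R :=
  n%:R^-1 * \sum_(i < n) CMI (P_hist p1 qx q i).

Definition avg_dist p1 qx (d : W -> W -> R) (q : policy) (n : nat) : R :=
  \sum_(xs : n.-tuple W) \sum_(ys : n.-tuple W)
    jointP p1 qx q xs ys * (n%:R^-1 * \sum_(i < n) d (tnth xs i) (tnth ys i)).

(* the "lim" of the paper read as limit superior (equal to lim when it exists) *)
Definition objective p1 qx (q : policy) : \bar R :=
  limn_esup (fun n => (avg_leak p1 qx q n)%:E).

Definition feasible p1 qx d (Dbar : R) (q : policy) : Prop :=
  (limn_esup (fun n => (avg_dist p1 qx d q n)%:E) <= Dbar%:E)%E.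

Definition explicit_term p1 qx (qs : spolicy) (i : nat) : R :=
  \sum_(yp : i.-tuple W) \sum_(y : W) \sum_(pr : option W * W)
    xlogr (P_simp p1 qx (embedS qs) i pr y yp)
      (qs i pr.1 pr.2 yp y /
         (PY p1 qx (embedS qs) i.+1 (rcons yp y) / PY p1 qx (embedS qs) i yp)).

End Privacy.

(* Given a policy q, let q^s_t(y | x_t, x_{t-1}, y^{t-1}) be the conditional
   law of Y_t given (X_{t-1}, X_t, Y^{t-1}) under q.  Since X is Markov, the law
   of (X_{t-1}, X_t) jointly with the releases is propagated by the transition
   kernel alone, so by induction on t the joint law of (X_{t-1}, X_t, Y^t) is the
   same under q and under q^s; the expected distortion only depends on these
   laws.  The term I(X^t; Y_t | Y^{t-1}) can only decrease when X^t is
   coarse-grained to (X_{t-1}, X_t) (data processing, via Gibbs' inequality),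
   and under a simplified policy this coarse-graining loses nothing.
   For the explicit formula, P(y^n | x^n) is the product of the q^s_t, so
   I(X^n; Y^n) = E[log P(Y^n | X^n) / P(Y^n)] telescopes into the sum over t of
   E[log q^s_t / P(Y_t | Y^{t-1})], which also equals I(X_t, X_{t-1}; Y_t | Y^{t-1}). *)

From Pilot Require Import Defs.
From mathcomp Require Import all_boot all_order all_algebra.
From mathcomp Require Import all_classical all_reals all_analysis.
From mathcomp Require Import ring lra.

Set Implicit Arguments.
Unset Strict Implicit.
Unset Printing Implicit Defensive.
Import Order.TTheory GRing.Theory Num.Theory.
Local Open Scope ring_scope.

Lemma xlogrE (R : realType) (p a : R) : xlogr p a = p * ln a.
Proof. by rewrite /xlogr; case: eqP => [->|]; rewrite ?mul0r. Qed.

Lemma ler_sum_term (R : numDomainType) (I : finType) (P : pred I) (F : I -> R) i :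
  P i -> (forall j, 0 <= F j) -> F i <= \sum_(j | P j) F j.
Proof. by move=> Pi F0; rewrite (bigD1 i) //= lerDl sumr_ge0. Qed.

Lemma ler_sum_termT (R : numDomainType) (I : finType) (F : I -> R) i :
  (forall j, 0 <= F j) -> F i <= \sum_j F j.
Proof. exact: ler_sum_term. Qed.

Lemma sumr3B (V : zmodType) (A B C : finType) (F G : A -> B -> C -> V) :
  \sum_a \sum_b \sum_c (F a b c - G a b c) =
  \sum_a \sum_b \sum_c F a b c - \sum_a \sum_b \sum_c G a b c.
Proof. by rewrite -sumrB; apply: eq_bigr => a _; rewrite -sumrB; apply: eq_bigr => b _; rewrite -sumrB. Qed.

Lemma sum3_rot (V : nmodType) (A B C : finType) (F : A -> B -> C -> V) :
  \sum_a \sum_b \sum_c F a b c = \sum_c \sum_a \sum_b F a b c.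
Proof.
transitivity (\sum_(p : A * B) \sum_c F p.1 p.2 c); first by rewrite pair_big.
by rewrite exchange_big; apply: eq_bigr => c _; rewrite pair_big.
Qed.

Lemma sum3_rev (V : nmodType) (A B C : finType) (F : A -> B -> C -> V) :
  \sum_a \sum_b \sum_c F a b c = \sum_c \sum_b \sum_a F a b c.
Proof. by rewrite sum3_rot; apply: eq_bigr => c _; rewrite exchange_big. Qed.

Lemma sum4_swap (V : nmodType) (A B C D : finType) (F : A -> B -> C -> D -> V) :
  \sum_a \sum_b \sum_c \sum_d F a b c d = \sum_c \sum_d \sum_a \sum_b F a b c d.
Proof.
transitivity (\sum_(p : A * B) \sum_(q : C * D) F p.1 p.2 q.1 q.2).
  by rewrite pair_big; apply: eq_bigr => p _; rewrite pair_big.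
by rewrite exchange_big [RHS]pair_big; apply: eq_bigr => q _; rewrite pair_big.
Qed.

Lemma sum_tuple_rcons (V : nmodType) (T : finType) n (F : n.+1.-tuple T -> V) :
  \sum_(t : n.+1.-tuple T) F t = \sum_(t : n.-tuple T) \sum_x F [tuple of rcons t x].
Proof.
rewrite pair_big /= (reindex (fun p : n.-tuple T * T => [tuple of rcons p.1 p.2])) //.
exists (fun t => ([tuple of belast (thead t) (behead t)], last (thead t) (behead t))).
  move=> [[[|a s] sz] x] _ /=; congr (_, _); rewrite ?last_rcons //.
  - exact: val_inj.
  - by apply: val_inj; rewrite /= belast_rcons.
by move=> t _; apply/val_inj; rewrite /= -lastI [in RHS](tuple_eta t).
Qed.

Lemma sum_tuple0 (V : nmodType) (T : finType) (F : 0.-tuple T -> V) :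
  \sum_(t : 0.-tuple T) F t = F [tuple].
Proof. by rewrite (big_pred1 [tuple]) // => t; apply/esym/eqP; exact: tuple0. Qed.

Lemma mem_zip_iota_lt (T : eqType) k n (s : seq T) pr :
  pr \in zip (iota k n) s -> (pr.1 < k + n)%N.
Proof.
elim: n k s => [|n IH] k [|y s] //=; rewrite in_cons => /orP[/eqP -> /=|/IH].
  by rewrite addnS ltnS leq_addr.
by rewrite addSnnS.
Qed.

Lemma lee_limn_esup (R : realType) (u v : (\bar R)^nat) :
  (forall n, (u n <= v n)%E) -> (limn_esup u <= limn_esup v)%E.
Proof.
move=> uv; rewrite !limn_esup_lim; apply: lee_lim; [exact: is_cvg_esups|exact: is_cvg_esups|].
apply: nearW => n; apply: ge_ereal_sup => _ [k nk <-].
by apply: le_trans (uv k) _; apply: ereal_sup_ubound; exists k.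
Qed.

Lemma ler_sub_mul_ln_div (R : realType) (p q : R) :
  0 <= p -> 0 <= q -> (0 < p -> 0 < q) -> p - q <= p * ln (p / q).
Proof.
move=> p0 q0 pq; have [->|pn0] := eqVneq p 0; first by rewrite mul0r sub0r oppr_le0.
have pp : 0 < p by rewrite lt_def pn0.
have qp := pq pp.
have ln_qp : ln (q / p) <= q / p - 1.
  have qp_gt0 : 0 < q / p by exact: divr_gt0.
  by have := @le_ln1Dx R (q / p - 1); rewrite (addrC 1) subrK; apply; lra.
rewrite -invf_div lnV ?posrE ?divr_gt0 // mulrN.
have : p * ln (q / p) <= p * (q / p - 1) by rewrite ler_pM2l.
by rewrite mulrBr mulr1 mulrCA divff ?gt_eqF // mulr1; lra.
Qed.

(** * Coarse-graining decreases conditional mutual information *)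

Section Marginals.
Context {R : realType} {A B C : finType}.
Variable Q : A -> B -> C -> R.

Definition marg_C c := \sum_a \sum_b Q a b c.
Definition marg_AC a c := \sum_b Q a b c.
Definition marg_BC b c := \sum_a Q a b c.

Lemma CMIE : CMI Q = \sum_a \sum_b \sum_c
  Q a b c * ln (Q a b c * marg_C c / (marg_AC a c * marg_BC b c)).
Proof. by do 3![apply: eq_bigr => ? _]; rewrite xlogrE. Qed.

End Marginals.

Section CoarseGraining.
Variables (R : realType) (A A' B C : finType) (f : A -> A').

Definition coarse (Q : A -> B -> C -> R) a' b c := \sum_(a | f a == a') Q a b c.

Lemma sum_coarse (Q : A -> B -> C -> R) (G : A' -> B -> C -> R) :
  \sum_a' \sum_b \sum_c coarse Q a' b c * G a' b c =
  \sum_a \sum_b \sum_c Q a b c * G (f a) b c.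
Proof.
rewrite [RHS](partition_big f predT) //=; apply: eq_bigr => a' _.
under eq_bigr => b _ do under eq_bigr => c _ do rewrite /coarse mulr_suml.
under eq_bigr => b _ do rewrite exchange_big /=.
by rewrite exchange_big /=; apply: eq_bigr => a /eqP <-.
Qed.

Variable P : A -> B -> C -> R.
Hypothesis P_ge0 : forall a b c, 0 <= P a b c.

Lemma marg_C_coarse c : marg_C (coarse P) c = marg_C P c.
Proof.
rewrite /marg_C /coarse [RHS](partition_big f predT) //=.
by apply: eq_bigr => a' _; rewrite exchange_big.
Qed.

Lemma marg_BC_coarse b c : marg_BC (coarse P) b c = marg_BC P b c.
Proof. by rewrite /marg_BC /coarse [RHS](partition_big f predT). Qed.

Lemma marg_AC_coarse a' c : marg_AC (coarse P) a' c = \sum_(a | f a == a') marg_AC P a c.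
Proof. by rewrite /marg_AC /coarse exchange_big. Qed.

Lemma coarse_ge0 a' b c : 0 <= coarse P a' b c.
Proof. exact: sumr_ge0. Qed.

Lemma le_marg_AC a b c : P a b c <= marg_AC P a c.
Proof. exact: ler_sum_termT. Qed.

Lemma le_marg_BC a b c : P a b c <= marg_BC P b c.
Proof. exact: ler_sum_termT. Qed.

Lemma le_marg_C a b c : P a b c <= marg_C P c.
Proof.
apply: le_trans (le_marg_AC a b c) _.
by apply: (ler_sum_termT (F := marg_AC P ^~ c)) => a'; apply: sumr_ge0.
Qed.

Lemma le_coarse a b c : P a b c <= coarse P (f a) b c.
Proof. exact: ler_sum_term. Qed.

Lemma CMI_coarseE : CMI (coarse P) = \sum_a \sum_b \sum_c P a b c *
  ln (coarse P (f a) b c * marg_C P c / (marg_AC (coarse P) (f a) c * marg_BC P b c)).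
Proof.
rewrite CMIE -(sum_coarse P (fun a' b c =>
  ln (coarse P a' b c * marg_C P c / (marg_AC (coarse P) a' c * marg_BC P b c)))).
by do 3![apply: eq_bigr => ? _]; rewrite marg_C_coarse marg_BC_coarse.
Qed.

(* Data processing: comparing each term with the reweighting [Q] below is an
   instance of Gibbs' inequality, since [Q] has total mass at most that of [P]. *)
Lemma CMI_coarse_le : CMI (coarse P) <= CMI P.
Proof.
rewrite CMI_coarseE CMIE -subr_ge0 -sumr3B.
pose Q a b c := marg_AC P a c * coarse P (f a) b c / marg_AC (coarse P) (f a) c.
have sumQ : \sum_a \sum_b \sum_c Q a b c <= \sum_a \sum_b \sum_c P a b c.
  rewrite [leLHS](eq_bigr _ (fun a _ => exchange_big _ _ _ _ _ _)).
  rewrite [leRHS](eq_bigr _ (fun a _ => exchange_big _ _ _ _ _ _)) /=.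
  apply: ler_sum => a _; apply: ler_sum => c _.
  rewrite /Q -mulr_suml -mulr_sumr -mulrA.
  have [->|nz] := eqVneq (marg_AC (coarse P) (f a) c) 0; last by rewrite divff // mulr1.
  by rewrite invr0 !mulr0 sumr_ge0.
apply: le_trans (_ : 0 <= \sum_a \sum_b \sum_c (P a b c - Q a b c)) _.
  by rewrite sumr3B subr_ge0.
apply: ler_sum => a _; apply: ler_sum => b _; apply: ler_sum => c _.
have [->|nz] := eqVneq (P a b c) 0.
  by rewrite !mul0r subrr sub0r oppr_le0 /Q divr_ge0 ?mulr_ge0 ?sumr_ge0 // => *; rewrite sumr_ge0.
have Pp : 0 < P a b c by rewrite lt_def nz P_ge0.
have posP x : P a b c <= x -> 0 < x by move=> ?; apply: lt_le_trans Pp _.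
have AC_gt0 := posP _ (le_marg_AC a b c); have BC_gt0 := posP _ (le_marg_BC a b c).
have C_gt0 := posP _ (le_marg_C a b c); have coarse_gt0 := posP _ (le_coarse a b c).
have coarseAC_gt0 : 0 < marg_AC (coarse P) (f a) c.
  by apply: lt_le_trans coarse_gt0 _; apply: (ler_sum_termT (F := coarse P (f a) ^~ c)) => ?; apply: coarse_ge0.
have Qp : 0 < Q a b c by rewrite /Q divr_gt0 ?mulr_gt0.
rewrite -mulrBr -ln_div ?posrE ?divr_gt0 ?mulr_gt0 //.
have -> : P a b c * marg_C P c / (marg_AC P a c * marg_BC P b c) /
  (coarse P (f a) b c * marg_C P c / (marg_AC (coarse P) (f a) c * marg_BC P b c)) =
  P a b c / Q a b c by rewrite /Q; field; rewrite !gt_eqF.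
by apply: ler_sub_mul_ln_div; rewrite ?ltW.
Qed.

Lemma CMI_coarse_eq (K : A' -> B -> C -> R) :
  (forall a b c, P a b c = marg_AC P a c * K (f a) b c) -> CMI (coarse P) = CMI P.
Proof.
move=> PK; rewrite CMI_coarseE CMIE.
apply: eq_bigr => a _; apply: eq_bigr => b _; apply: eq_bigr => c _.
have [->|nz] := eqVneq (P a b c) 0; first by rewrite !mul0r.
have Pp : 0 < P a b c by rewrite lt_def nz P_ge0.
have AC_gt0 : 0 < marg_AC P a c by apply: lt_le_trans (le_marg_AC a b c).
have BC_gt0 : 0 < marg_BC P b c by apply: lt_le_trans (le_marg_BC a b c).
set S := \sum_(a0 | f a0 == f a) marg_AC P a0 c.
have Sp : 0 < S.
  by apply: lt_le_trans AC_gt0 _; apply: (ler_sum_term (F := marg_AC P ^~ c)) => // ?; apply: sumr_ge0.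
have coarseK : coarse P (f a) b c = S * K (f a) b c.
  by rewrite /coarse /S mulr_suml; apply: eq_bigr => a0 /eqP <-.
rewrite coarseK marg_AC_coarse -/S [in RHS](PK a b c).
by congr (_ * ln _); [exact: PK | field; rewrite !gt_eqF].
Qed.

End CoarseGraining.

(** * Trajectories of the chain and of the releases *)

Section Trajectories.
Variables (R : realType) (W : finType) (p1 : W -> R) (qx : W -> W -> R).
Hypotheses (p1_pmf : is_pmf p1) (qx_kernel : is_kernel qx).

Local Notation jointP := (jointP p1 qx).
Local Notation PY := (PY p1 qx).
Local Notation policy := (@policy R W).

Fixpoint path_prob (a : W) (s : seq W) : R :=
  if s is b :: s' then qx a b * path_prob b s' else 1.

Lemma prod_zip_path_prob a s : \prod_(pr <- zip (a :: s) s) qx pr.1 pr.2 = path_prob a s.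
Proof. by elim: s a => [|b s IH] a /=; rewrite ?big_nil // big_cons IH. Qed.

Lemma path_prob_rcons a s z : path_prob a (rcons s z) = path_prob a s * qx (last a s) z.
Proof. by elim: s a => [|b s IH] a /=; rewrite ?mul1r ?mulr1 // IH mulrA. Qed.

Definition olast (s : seq W) : option W := if s is a :: s' then Some (last a s') else None.

Lemma olast_rcons s z : olast (rcons s z) = Some z.
Proof. by case: s => [|a s] //=; rewrite last_rcons. Qed.

Lemma lasttwo_rcons s z : lasttwo (rcons s z) = Some (olast s, z).
Proof. by rewrite /lasttwo rev_rcons; case: s => [|a s] //=; rewrite lastI rev_rcons. Qed.

Definition next_prob (s : seq W) (z : W) : R :=
  if olast s is Some a then qx a z else p1 z.

Lemma sum_next_prob s : \sum_z next_prob s z = 1.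
Proof. by rewrite /next_prob; case: (olast s) => [a|]; [apply: qx_kernel.2 | apply: p1_pmf.2]. Qed.

Lemma next_prob_rcons s z w : next_prob (rcons s z) w = qx z w.
Proof. by rewrite /next_prob olast_rcons. Qed.

Lemma chainP_rcons s z : chainP p1 qx (rcons s z) = chainP p1 qx s * next_prob s z.
Proof.
case: s => [|a s]; rewrite /chainP /next_prob /=; first by rewrite big_nil mulr1 mul1r.
by rewrite !prod_zip_path_prob path_prob_rcons mulrA.
Qed.

Lemma chainP_ge0 s : 0 <= chainP p1 qx s.
Proof.
case: s => [|a s] //=; rewrite mulr_ge0 //; first exact: p1_pmf.1.
by apply: prodr_ge0 => pr _; apply: qx_kernel.1.
Qed.

Lemma polP_nil (q : policy) xs : polP q xs [::] = 1.
Proof. by rewrite /polP big_nil. Qed.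

Lemma polP_rcons_y (q : policy) xs ys y :
  polP q xs (rcons ys y) = polP q xs ys * q (size ys) (take (size ys).+1 xs) ys y.
Proof.
rewrite /polP size_rcons -addn1 iotaD add0n -cats1 zip_cat ?size_iota // big_cat /=.
rewrite big_cons big_nil mulr1 take_size_cat ?addn1 //; congr (_ * _).
apply: eq_big_seq => pr /mem_zip_iota_lt; rewrite add0n => lt_pr.
by rewrite takel_cat // ltnW.
Qed.

Lemma polP_rcons_x (q : policy) xs x ys : (size ys <= size xs)%N ->
  polP q (rcons xs x) ys = polP q xs ys.
Proof.
move=> le_yx; apply: eq_big_seq => pr /mem_zip_iota_lt; rewrite add0n => lt_pr.
by rewrite -cats1 takel_cat // (leq_trans lt_pr le_yx).
Qed.

Lemma is_policyH_seq (q : policy) i xs ys : is_policyH q -> size xs = i.+1 -> size ys = i ->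
  (forall y, 0 <= q i xs ys y) /\ \sum_y q i xs ys y = 1.
Proof. by move=> qH /eqP xs_i /eqP ys_i; exact: (qH i (Tuple xs_i) (Tuple ys_i)). Qed.

Lemma polP_ge0 (q : policy) xs ys : is_policyH q -> (size ys <= size xs)%N -> 0 <= polP q xs ys.
Proof.
move=> qH le_yx; rewrite /polP big_seq_cond; apply: prodr_ge0 => pr /andP[+ _].
move=> /mem_zip_iota_lt; rewrite add0n => lt_pr.
apply: (is_policyH_seq qH _ _).1; rewrite size_takel //; first exact: leq_trans lt_pr le_yx.
exact: ltnW.
Qed.

Lemma jointP_ge0 (q : policy) xs ys : is_policyH q -> (size ys <= size xs)%N ->
  0 <= jointP q xs ys.
Proof. by move=> qH le_yx; rewrite mulr_ge0 ?chainP_ge0 ?polP_ge0. Qed.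

Lemma jointP_rcons_x (q : policy) xs x ys : (size ys <= size xs)%N ->
  jointP q (rcons xs x) ys = jointP q xs ys * next_prob xs x.
Proof. by move=> le_yx; rewrite /Defs.jointP chainP_rcons polP_rcons_x // mulrAC. Qed.

Lemma jointP_rcons_y (q : policy) xs ys y : size xs = (size ys).+1 ->
  jointP q xs (rcons ys y) = jointP q xs ys * q (size ys) xs ys y.
Proof. by move=> xs_y; rewrite /Defs.jointP polP_rcons_y take_oversize ?xs_y // mulrA. Qed.

Lemma jointP_rcons_xy (q : policy) xs x ys y : size ys = size xs ->
  jointP q (rcons xs x) (rcons ys y) =
  jointP q xs ys * next_prob xs x * q (size ys) (rcons xs x) ys y.
Proof.
by move=> ys_xs; rewrite jointP_rcons_y ?size_rcons ?ys_xs // jointP_rcons_x ?ys_xs.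
Qed.

Lemma sum_jointP_rcons_xy (q : policy) xs ys : is_policyH q -> size ys = size xs ->
  \sum_x \sum_y jointP q (rcons xs x) (rcons ys y) = jointP q xs ys.
Proof.
move=> qH ys_xs.
have q_sum1 x : \sum_y q (size ys) (rcons xs x) ys y = 1.
  by apply: (is_policyH_seq qH _ _).2; rewrite ?size_rcons ?ys_xs.
under eq_bigr => x _ do under eq_bigr => y _ do rewrite jointP_rcons_xy //.
under eq_bigr => x _ do rewrite -mulr_sumr q_sum1 mulr1.
by rewrite -mulr_sumr sum_next_prob mulr1.
Qed.

Lemma sum_lasttwo_eq m pr (G : seq W -> R) :
  \sum_(xs : m.+1.-tuple W | lasttwo xs == Some pr) G xs =
  \sum_(t : m.-tuple W) \sum_x ((olast t, x) == pr)%:R * G (rcons t x).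
Proof.
rewrite big_mkcond sum_tuple_rcons; apply: eq_bigr => t _; apply: eq_bigr => x _ /=.
by rewrite lasttwo_rcons (inj_eq Some_inj); case: eqP; rewrite ?mul1r ?mul0r.
Qed.

Lemma sum_lasttwo m (F : seq W -> option W * W -> R) :
  \sum_pr \sum_(xs : m.+1.-tuple W | lasttwo xs == Some pr) F xs pr =
  \sum_(t : m.-tuple W) \sum_x F (rcons t x) (olast t, x).
Proof.
under eq_bigr => pr _ do rewrite (sum_lasttwo_eq m pr (F ^~ pr)).
rewrite exchange_big; apply: eq_bigr => t _; rewrite exchange_big; apply: eq_bigr => x _.
rewrite (bigD1 (olast t, x)) //= eqxx mul1r big1 ?addr0 // => pr /negbTE.
by rewrite eq_sym => ->; rewrite mul0r.
Qed.

Definition last2_joint (q : policy) m pr (ys : seq W) : R :=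
  \sum_(xs : m.+1.-tuple W | lasttwo xs == Some pr) jointP q xs ys.

Lemma last2_joint_ge0 (q : policy) m pr ys : is_policyH q -> (size ys <= m.+1)%N ->
  0 <= last2_joint q m pr ys.
Proof. by move=> qH le_ym; apply: sumr_ge0 => xs _; rewrite jointP_ge0 ?size_tuple. Qed.

Lemma sum_last2_joint_rcons (q : policy) m pr yp : is_policyH q -> size yp = m ->
  \sum_y last2_joint q m pr (rcons yp y) = last2_joint q m pr yp.
Proof.
move=> qH yp_m; rewrite exchange_big; apply: eq_bigr => xs _.
under eq_bigr => y _ do rewrite jointP_rcons_y ?size_tuple ?yp_m //.
by rewrite -mulr_sumr (is_policyH_seq qH (size_tuple xs) yp_m).2 mulr1.
Qed.

Lemma last2_joint_embedS (qs : spolicy) m pr yp y : size yp = m ->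
  last2_joint (embedS qs) m pr (rcons yp y) =
  last2_joint (embedS qs) m pr yp * qs m pr.1 pr.2 yp y.
Proof.
move=> yp_m; rewrite /last2_joint mulr_suml; apply: eq_bigr => xs /eqP xs_pr.
by rewrite jointP_rcons_y ?size_tuple ?yp_m // /embedS xs_pr; case: pr xs_pr.
Qed.

Lemma last2_joint_nil (q q' : policy) m pr :
  last2_joint q m pr [::] = last2_joint q' m pr [::].
Proof. by apply: eq_bigr => xs _; rewrite /Defs.jointP !polP_nil. Qed.

Lemma sum_last2_joint_prev (q : policy) m z ys :
  \sum_pw last2_joint q m (pw, z) ys = \sum_(t : m.-tuple W) jointP q (rcons t z) ys.
Proof.
under eq_bigr => pw _ do rewrite /last2_joint (sum_lasttwo_eq m (pw, z) (jointP q ^~ ys)).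
rewrite exchange_big; apply: eq_bigr => t _.
rewrite (bigD1 (olast t)) //= [X in _ + X]big1 ?addr0; last first.
  by move=> pw /negbTE pw_t; apply: big1 => x _; rewrite xpair_eqE eq_sym pw_t mul0r.
rewrite (bigD1 z) //= eqxx mul1r big1 ?addr0 // => x /negbTE x_z.
by rewrite xpair_eqE x_z andbF mul0r.
Qed.

(* Markov property: the law of (X_{m+1}, X_{m+2}) is propagated from that of
   (X_m, X_{m+1}) by the transition kernel, whatever the releases. *)
Lemma last2_joint_step (q : policy) m pw w ys : (size ys <= m.+1)%N ->
  last2_joint q m.+1 (pw, w) ys =
  \sum_z (Some z == pw)%:R * qx z w * \sum_pw' last2_joint q m (pw', z) ys.
Proof.
move=> le_ym; rewrite /last2_joint (sum_lasttwo_eq m.+1 (pw, w) (jointP q ^~ ys)).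
under eq_bigr => t _ do under eq_bigr => x _ do rewrite jointP_rcons_x ?size_tuple //.
transitivity (\sum_(t : m.+1.-tuple W) (olast t == pw)%:R * (jointP q t ys * next_prob t w)).
  apply: eq_bigr => t _; rewrite (bigD1 w) //= [X in _ + X]big1 ?addr0; last first.
    by move=> x /negbTE x_w; rewrite xpair_eqE x_w andbF mul0r.
  by rewrite xpair_eqE eqxx andbT.
rewrite sum_tuple_rcons.
under [RHS]eq_bigr => z _ do rewrite sum_last2_joint_prev mulr_sumr.
rewrite exchange_big; apply: eq_bigr => t _; apply: eq_bigr => z _ /=.
by rewrite olast_rcons next_prob_rcons; ring.
Qed.

Lemma lasttwo_tuple m (xs : m.+1.-tuple W) : exists pr, lasttwo xs = Some pr.
Proof. by case: xs => [[|a s] sz] //=; rewrite lastI lasttwo_rcons; eexists. Qed.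

Definition last2 m (xs : m.+1.-tuple W) : option W * W := odflt (None, thead xs) (lasttwo xs).

Lemma lasttwo_last2 m (xs : m.+1.-tuple W) : lasttwo xs = Some (last2 xs).
Proof. by rewrite /last2; have [pr ->] := lasttwo_tuple xs. Qed.

Lemma P_simp_coarse (q : policy) m : P_simp p1 qx q m = coarse (@last2 m) (P_hist p1 qx q m).
Proof.
apply/funext => pr; apply/funext => y; apply/funext => yp.
by apply: eq_bigl => xs; rewrite lasttwo_last2 (inj_eq Some_inj).
Qed.

Lemma P_hist_ge0 (q : policy) m : is_policyH q -> forall xs y yp, 0 <= P_hist p1 qx q m xs y yp.
Proof. by move=> qH xs y yp; rewrite jointP_ge0 // size_rcons !size_tuple. Qed.

Lemma CMI_hist_embedS (qs : spolicy) m : is_policyH (embedS qs) ->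
  CMI (P_hist p1 qx (embedS qs) m) = CMI (P_simp p1 qx (embedS qs) m).
Proof.
move=> qsH; rewrite P_simp_coarse; symmetry.
apply: (CMI_coarse_eq (@P_hist_ge0 _ m qsH) (K := fun pr y yp => qs m pr.1 pr.2 yp y)) => xs y yp.
have embedSE y' : embedS qs m xs yp y' = qs m (last2 xs).1 (last2 xs).2 yp y'.
  by rewrite /embedS lasttwo_last2; case: (last2 xs).
have P_histE y' : P_hist p1 qx (embedS qs) m xs y' yp = jointP (embedS qs) xs yp * embedS qs m xs yp y'.
  by rewrite /P_hist jointP_rcons_y ?size_tuple.
rewrite /marg_AC P_histE embedSE; under eq_bigr => y' _ do rewrite P_histE.
by rewrite -mulr_sumr (is_policyH_seq qsH (size_tuple xs) (size_tuple yp)).2 mulr1.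
Qed.

Lemma sum_jointP_take (q : policy) k m (G : seq W -> seq W -> R) :
  is_policyH q -> (k <= m)%N ->
  \sum_(xs : m.-tuple W) \sum_(ys : m.-tuple W) jointP q xs ys * G (take k xs) (take k ys) =
  \sum_(xs : k.-tuple W) \sum_(ys : k.-tuple W) jointP q xs ys * G xs ys.
Proof.
move=> qH /subnKC <-; elim: (m - k)%N => [|d IH].
  by rewrite addn0; do 2![apply: eq_bigr => ? _]; rewrite !take_oversize ?size_tuple.
rewrite addnS sum_tuple_rcons -IH; apply: eq_bigr => xs _.
under eq_bigr => x _ do rewrite sum_tuple_rcons.
rewrite exchange_big; apply: eq_bigr => ys _ /=.
have take_rcons (s : (k + d).-tuple W) z : take k (rcons s z) = take k s.
  by rewrite -cats1 takel_cat // size_tuple leq_addr.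
have ys_xs : size ys = size xs by rewrite !size_tuple.
rewrite -(sum_jointP_rcons_xy qH ys_xs) mulr_suml.
by apply: eq_bigr => x _; rewrite mulr_suml; apply: eq_bigr => y _; rewrite !take_rcons.
Qed.

Definition mean_dist_at (q : policy) (D : W -> W -> R) i :=
  \sum_(yp : i.-tuple W) \sum_y \sum_pr P_simp p1 qx q i pr y yp * D pr.2 y.

Lemma sum_jointP_last (q : policy) i x0 (D : W -> W -> R) :
  \sum_(xs : i.+1.-tuple W) \sum_(ys : i.+1.-tuple W)
    jointP q xs ys * D (last x0 xs) (last x0 ys) = mean_dist_at q D i.
Proof.
have P_simp_sum (yp : i.-tuple W) y : \sum_pr P_simp p1 qx q i pr y yp * D pr.2 y =
    \sum_(t : i.-tuple W) \sum_x jointP q (rcons t x) (rcons yp y) * D x y.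
  rewrite -(sum_lasttwo i (fun xs pr => jointP q xs (rcons yp y) * D pr.2 y)).
  by apply: eq_bigr => pr _; rewrite /P_simp mulr_suml.
rewrite /mean_dist_at; under [RHS]eq_bigr => yp _ do under eq_bigr => y _ do rewrite P_simp_sum.
rewrite sum_tuple_rcons -sum4_swap; apply: eq_bigr => t _; apply: eq_bigr => x _.
by rewrite sum_tuple_rcons; apply: eq_bigr => yp _; apply: eq_bigr => y _; rewrite /= !last_rcons.
Qed.

Lemma sum_jointP_tnth (q : policy) n (i : 'I_n) (D : W -> W -> R) : is_policyH q ->
  \sum_(xs : n.-tuple W) \sum_(ys : n.-tuple W) jointP q xs ys * D (tnth xs i) (tnth ys i) =
  mean_dist_at q D i.
Proof.
move=> qH; case: (pickP (@predT W)) => [x0 _|W0]; last first.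
  rewrite /mean_dist_at !big1 // => [yp _|xs _]; last by have := W0 (tnth xs i).
  by apply: big1 => y _; have := W0 y.
rewrite -(sum_jointP_last q i x0 D).
rewrite -(sum_jointP_take (fun s t => D (last x0 s) (last x0 t)) qH (ltn_ord i)).
have tnth_take (t : n.-tuple W) : tnth t i = last x0 (take i.+1 t).
  by rewrite (tnth_nth x0) -nth_last size_takel ?size_tuple // nth_take.
by do 2![apply: eq_bigr => ? _]; rewrite !tnth_take.
Qed.

Lemma avg_distE (q : policy) D n : is_policyH q ->
  avg_dist p1 qx D q n = n%:R^-1 * \sum_(i < n) mean_dist_at q D i.
Proof.
move=> qH; rewrite /avg_dist.
transitivity (\sum_(xs : n.-tuple W) \sum_(ys : n.-tuple W) \sum_(i < n)
   n%:R^-1 * (jointP q xs ys * D (tnth xs i) (tnth ys i))).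
  by do 2![apply: eq_bigr => ? _]; rewrite mulrCA !mulr_sumr.
rewrite sum3_rot mulr_sumr; apply: eq_bigr => i _.
by rewrite -sum_jointP_tnth // mulr_sumr; apply: eq_bigr => xs _; rewrite mulr_sumr.
Qed.

(** * Simplified policies *)

(* The conditional law of Y_{m+1} given (X_m, X_{m+1}, Y^m) under [q]; it is
   uniform, hence arbitrary, when the conditioning event is null. *)
Definition simplify_policy (q : policy) : @spolicy R W := fun m pw w yp y =>
  if last2_joint q m (pw, w) yp == 0 then #|W|%:R^-1
  else last2_joint q m (pw, w) (rcons yp y) / last2_joint q m (pw, w) yp.

Lemma is_policyH_simplify (q : policy) : is_policyH q -> is_policyH (embedS (simplify_policy q)).
Proof.
move=> qH i xs ys; have [[pw w] xs_pr] := lasttwo_tuple xs.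
rewrite /embedS xs_pr /simplify_policy; case: eqP => [_|/eqP nz].
  split=> [y|]; first by rewrite invr_ge0 ler0n.
  have W_gt0 : (0 < #|W|)%N by apply/card_gt0P; exists (thead xs).
  by rewrite sumr_const -[_ *+ _]mulr_natr mulVf // pnatr_eq0 -lt0n.
split=> [y|]; first by rewrite divr_ge0 ?last2_joint_ge0 ?size_rcons ?size_tuple.
by rewrite -mulr_suml sum_last2_joint_rcons ?size_tuple // divff.
Qed.

Section Simplify.
Variable q : policy.
Hypothesis qH : is_policyH q.
Local Notation qs := (embedS (simplify_policy q)).

Lemma last2_joint_simplify_rcons m pr yp y : size yp = m ->
  last2_joint qs m pr yp = last2_joint q m pr yp ->
  last2_joint qs m pr (rcons yp y) = last2_joint q m pr (rcons yp y).
Proof.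
case: pr => pw w yp_m eq_yp; rewrite last2_joint_embedS // eq_yp /= /simplify_policy.
case: eqP => [z|/eqP nz]; last by rewrite mulrC divfK.
rewrite z mul0r; apply/esym/eqP; rewrite eq_le last2_joint_ge0 ?size_rcons ?yp_m // andbT.
rewrite -z -(@sum_last2_joint_rcons q m (pw, w) yp) //.
by apply: (ler_sum_termT (F := fun y => last2_joint q m (pw, w) (rcons yp y))) => y';
  rewrite last2_joint_ge0 ?size_rcons ?yp_m.
Qed.

Lemma last2_joint_simplify m pr yp : size yp = m ->
  last2_joint qs m pr yp = last2_joint q m pr yp.
Proof.
elim: m pr yp => [|m IH] [pw w] yp; first by move/size0nil ->; apply: last2_joint_nil.
case/lastP: yp => [//|s a]; rewrite size_rcons => -[s_m].
rewrite !last2_joint_step ?size_rcons ?s_m //; apply: eq_bigr => z _; congr (_ * _).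
by apply: eq_bigr => pw' _; apply: last2_joint_simplify_rcons => //; apply: IH.
Qed.

Lemma P_simp_simplify m : P_simp p1 qx qs m = P_simp p1 qx q m.
Proof.
apply/funext => pr; apply/funext => y; apply/funext => yp.
apply: (@last2_joint_simplify_rcons m) => //; first exact: size_tuple.
exact: last2_joint_simplify (size_tuple yp).
Qed.

Lemma CMI_hist_simplify_le m : CMI (P_hist p1 qx qs m) <= CMI (P_hist p1 qx q m).
Proof.
rewrite CMI_hist_embedS; last exact: is_policyH_simplify.
by rewrite P_simp_simplify P_simp_coarse; apply: CMI_coarse_le (@P_hist_ge0 _ m qH).
Qed.

Lemma objective_simplify_le : (objective p1 qx qs <= objective p1 qx q)%E.
Proof.
apply: lee_limn_esup => n; rewrite lee_fin ler_wpM2l ?invr_ge0 //.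
by apply: ler_sum => i _; apply: CMI_hist_simplify_le.
Qed.

Lemma feasible_simplify D Dbar : feasible p1 qx D Dbar q -> feasible p1 qx D Dbar qs.
Proof.
rewrite /feasible.
suff -> : (fun n => (avg_dist p1 qx D qs n)%:E) = (fun n => (avg_dist p1 qx D q n)%:E) by [].
apply/funext => n; rewrite !avg_distE //; last exact: is_policyH_simplify.
by congr ((_ * _)%:E); apply: eq_bigr => i _; rewrite /mean_dist_at P_simp_simplify.
Qed.

End Simplify.

(** * Leakage of a simplified policy *)

Lemma sum_P_simp_pair (q : policy) m y (yp : m.-tuple W) :
  \sum_pr P_simp p1 qx q m pr y yp = PY q m.+1 (rcons yp y).
Proof. by rewrite (sum_lasttwo m (fun xs _ => jointP q xs (rcons yp y))) /Defs.PY sum_tuple_rcons. Qed.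

Lemma sum_PY_rcons (q : policy) m yp : is_policyH q -> size yp = m ->
  \sum_y PY q m.+1 (rcons yp y) = PY q m yp.
Proof.
move=> qH yp_m; rewrite /Defs.PY exchange_big /= sum_tuple_rcons; apply: eq_bigr => t _.
by rewrite -(sum_jointP_rcons_xy qH (_ : size yp = size t)) ?size_tuple.
Qed.

Lemma ler_jointP_PY (q : policy) m (xs : m.-tuple W) ys : is_policyH q -> (size ys <= m)%N ->
  jointP q xs ys <= PY q m ys.
Proof.
move=> qH le_ym; rewrite /Defs.PY.
apply: (ler_sum_termT (F := fun xs' : m.-tuple W => jointP q xs' ys)) => xs'.
by rewrite jointP_ge0 ?size_tuple.
Qed.

Lemma CMI_P_simp_explicit (qs : spolicy) m : is_policyH (embedS qs) ->
  CMI (P_simp p1 qx (embedS qs) m) = explicit_term p1 qx qs m.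
Proof.
move=> qsH; rewrite CMIE /explicit_term sum3_rev.
apply: eq_bigr => yp _; apply: eq_bigr => y _; apply: eq_bigr => pr _.
set P := P_simp p1 qx (embedS qs) m; have yp_m := size_tuple yp.
have P_ge0 pr' y' yp' : 0 <= P pr' y' yp'.
  by rewrite /P /P_simp -/(last2_joint _ _ _ _) last2_joint_ge0 // size_rcons size_tuple.
have PE : P pr y yp = last2_joint (embedS qs) m pr yp * qs m pr.1 pr.2 yp y.
  exact: last2_joint_embedS.
have -> : marg_BC P y yp = PY (embedS qs) m.+1 (rcons yp y) by apply: sum_P_simp_pair.
have -> : marg_C P yp = PY (embedS qs) m yp.
  rewrite /marg_C exchange_big /= -(sum_PY_rcons qsH yp_m).
  by apply: eq_bigr => y' _; apply: sum_P_simp_pair.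
have -> : marg_AC P pr yp = last2_joint (embedS qs) m pr yp by apply: sum_last2_joint_rcons.
rewrite xlogrE; have [->|nz] := eqVneq (P pr y yp) 0; first by rewrite !mul0r.
have Pp : 0 < P pr y yp by rewrite lt_def nz P_ge0.
have le_P_PY1 : P pr y yp <= PY (embedS qs) m.+1 (rcons yp y).
  by rewrite -sum_P_simp_pair; apply: (ler_sum_termT (F := fun pr' => P pr' y yp)).
have le_PY : PY (embedS qs) m.+1 (rcons yp y) <= PY (embedS qs) m yp.
  rewrite -(sum_PY_rcons qsH yp_m).
  apply: (ler_sum_termT (F := fun y' => PY (embedS qs) m.+1 (rcons yp y'))) => y'.
  by apply: sumr_ge0 => xs _; rewrite jointP_ge0 // size_rcons !size_tuple.
have L0 : last2_joint (embedS qs) m pr yp != 0 by apply: contraNneq nz => L0; rewrite PE L0 mul0r.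
have PY1 : PY (embedS qs) m.+1 (rcons yp y) != 0 by rewrite gt_eqF // (lt_le_trans Pp).
have PY0 : PY (embedS qs) m yp != 0 by rewrite gt_eqF // (lt_le_trans Pp (le_trans le_P_PY1 le_PY)).
by congr (_ * ln _); rewrite PE; field; rewrite L0 PY1 PY0.
Qed.

Lemma sum_polP (q : policy) m xs : is_policyH q -> (m <= size xs)%N ->
  \sum_(ys : m.-tuple W) polP q xs ys = 1.
Proof.
move=> qH; elim: m => [|m IH] le_mx; first by rewrite sum_tuple0 polP_nil.
rewrite sum_tuple_rcons -(IH (ltnW le_mx)); apply: eq_bigr => ys _ /=.
under eq_bigr => y _ do rewrite polP_rcons_y.
rewrite -mulr_sumr size_tuple (is_policyH_seq qH _ (size_tuple ys)).2 ?mulr1 //.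
by rewrite size_takel.
Qed.

Definition info_density (q : policy) (xs ys : seq W) : R :=
  ln (polP q xs ys / PY q (size ys) ys).

Definition mean_info_density (q : policy) n : R :=
  \sum_(xs : n.-tuple W) \sum_(ys : n.-tuple W) jointP q xs ys * info_density q xs ys.

Lemma leakageE (q : policy) n : is_policyH q -> leakage p1 qx q n = mean_info_density q n.
Proof.
move=> qH; apply: eq_bigr => xs _; apply: eq_bigr => ys _.
rewrite xlogrE /info_density size_tuple; have [->|nz] := eqVneq (jointP q xs ys) 0.
  by rewrite !mul0r.
have chain_nz : chainP p1 qx xs != 0.
  by apply: contraNneq nz => c0; rewrite /Defs.jointP c0 mul0r.
rewrite /Defs.jointP -mulr_sumr sum_polP ?size_tuple // mulr1.
by rewrite -mulf_div divff // mul1r.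
Qed.

Lemma info_density_rcons (q : policy) m (t yp : m.-tuple W) x y : is_policyH q ->
  jointP q (rcons t x) (rcons yp y) != 0 ->
  info_density q (rcons t x) (rcons yp y) =
  info_density q t yp + ln (q m (rcons t x) yp y / (PY q m.+1 (rcons yp y) / PY q m yp)).
Proof.
move=> qH nz; have t_m := size_tuple t; have yp_m := size_tuple yp.
have J_gt0 : 0 < jointP q (rcons t x) (rcons yp y).
  by rewrite lt_def nz jointP_ge0 // !size_rcons t_m yp_m.
move: nz; rewrite jointP_rcons_xy ?t_m ?yp_m // 2!mulf_eq0 !negb_or => /andP[/andP[J0 _] q0].
have Jp : 0 < jointP q t yp by rewrite lt_def J0 jointP_ge0 ?t_m ?yp_m.
have qp : 0 < q m (rcons t x) yp y.
  by rewrite lt_def q0 (is_policyH_seq qH _ yp_m).1 // size_rcons t_m.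
have polp : 0 < polP q t yp.
  rewrite lt_def polP_ge0 ?t_m ?yp_m // andbT.
  by apply: contraNneq J0 => p0; rewrite /Defs.jointP p0 mulr0.
have PY0 : 0 < PY q m yp by apply: lt_le_trans Jp (ler_jointP_PY _ qH _); rewrite yp_m.
have PY1 : 0 < PY q m.+1 (rcons yp y).
  apply: lt_le_trans J_gt0 (ler_jointP_PY [tuple of rcons t x] qH _).
  by rewrite size_rcons yp_m.
rewrite /info_density size_rcons yp_m polP_rcons_y polP_rcons_x ?t_m ?yp_m //.
rewrite take_oversize ?size_rcons ?t_m ?yp_m // -lnM ?posrE ?divr_gt0 //.
by congr ln; field; rewrite !gt_eqF.
Qed.

Lemma mean_info_density_rcons (q : policy) m : is_policyH q ->
  mean_info_density q m.+1 = mean_info_density q m +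
  \sum_(t : m.-tuple W) \sum_x \sum_(yp : m.-tuple W) \sum_y jointP q (rcons t x) (rcons yp y) *
    ln (q m (rcons t x) yp y / (PY q m.+1 (rcons yp y) / PY q m yp)).
Proof.
move=> qH; rewrite /mean_info_density sum_tuple_rcons.
under eq_bigr => t _ do under eq_bigr => x _ do rewrite sum_tuple_rcons.
transitivity (\sum_(t : m.-tuple W) \sum_x \sum_(yp : m.-tuple W) \sum_y
  (jointP q (rcons t x) (rcons yp y) * info_density q t yp +
   jointP q (rcons t x) (rcons yp y) *
     ln (q m (rcons t x) yp y / (PY q m.+1 (rcons yp y) / PY q m yp)))).
  apply: eq_bigr => t _; apply: eq_bigr => x _; apply: eq_bigr => yp _; apply: eq_bigr => y _.
  rewrite -mulrDr; have [->|nz] := eqVneq (jointP q (rcons t x) (rcons yp y)) 0.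
    by rewrite !mul0r.
  by rewrite info_density_rcons.
under eq_bigr => t _ do under eq_bigr => x _ do under eq_bigr => yp _ do rewrite big_split.
under eq_bigr => t _ do under eq_bigr => x _ do rewrite big_split.
under eq_bigr => t _ do rewrite big_split.
rewrite big_split; congr (_ + _); apply: eq_bigr => t _; rewrite exchange_big.
apply: eq_bigr => yp _ /=.
rewrite -(sum_jointP_rcons_xy qH (_ : size yp = size t)) ?size_tuple // mulr_suml.
by apply: eq_bigr => x _; rewrite mulr_suml.
Qed.

Lemma explicit_termE (qs : spolicy) m : explicit_term p1 qx qs m =
  \sum_(t : m.-tuple W) \sum_x \sum_(yp : m.-tuple W) \sum_y
    jointP (embedS qs) (rcons t x) (rcons yp y) *
    ln (embedS qs m (rcons t x) yp y /
        (PY (embedS qs) m.+1 (rcons yp y) / PY (embedS qs) m yp)).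
Proof.
rewrite /explicit_term sum4_swap; apply: eq_bigr => yp _; apply: eq_bigr => y _.
under eq_bigr => pr _ do rewrite xlogrE /P_simp mulr_suml.
rewrite (sum_lasttwo m (fun xs pr => jointP (embedS qs) xs (rcons yp y) *
  ln (qs m pr.1 pr.2 yp y / (PY (embedS qs) m.+1 (rcons yp y) / PY (embedS qs) m yp)))).
by apply: eq_bigr => t _; apply: eq_bigr => x _; rewrite /embedS lasttwo_rcons.
Qed.

Lemma leakage_explicit (qs : spolicy) n : is_policyH (embedS qs) ->
  leakage p1 qx (embedS qs) n = \sum_(i < n) explicit_term p1 qx qs i.
Proof.
move=> qsH; rewrite leakageE //; elim: n => [|n IH].
  rewrite big_ord0 /mean_info_density !sum_tuple0 /info_density /= polP_nil.
  by rewrite /Defs.PY sum_tuple0 /Defs.jointP polP_nil mulr1 divr1 ln1 mulr0.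
by rewrite mean_info_density_rcons // big_ord_recr /= IH explicit_termE.
Qed.

End Trajectories.

Theorem theorem1 (R : realType) (W : finType)
  (p1 : W -> R) (qx : W -> W -> R) (d : W -> W -> R) (Dbar : R) :
  is_pmf p1 -> is_kernel qx ->
  (forall q : policy, is_policyH q -> feasible p1 qx d Dbar q ->
     exists qs : spolicy,
       [/\ is_policyH (embedS qs), feasible p1 qx d Dbar (embedS qs)
         & (objective p1 qx (embedS qs) <= objective p1 qx q)%E])
  /\
  (forall qs : spolicy, is_policyH (embedS qs) -> forall n : nat,
     leakage p1 qx (embedS qs) n
       = \sum_(i < n) CMI (P_simp p1 qx (embedS qs) i)
     /\ \sum_(i < n) CMI (P_simp p1 qx (embedS qs) i)
       = \sum_(i < n) explicit_term p1 qx qs i).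
Proof.
move=> p1_pmf qx_kernel; split.
  move=> q qH q_feasible; exists (simplify_policy p1 qx q); split.
  - exact: is_policyH_simplify.
  - exact: feasible_simplify.
  - exact: objective_simplify_le.
move=> qs qsH n.
have CMI_explicit : \sum_(i < n) CMI (P_simp p1 qx (embedS qs) i) =
    \sum_(i < n) explicit_term p1 qx qs i.
  by apply: eq_bigr => i _; apply: CMI_P_simp_explicit.
by rewrite CMI_explicit leakage_explicit.
Qed.
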